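(* Let $\mathbf q^{CAV}=(q^{CAV}_1,\dots,q^{CAV}_R)$ be route flows with $q^{CAV}=\sum_rq^{CAV}_r>0$ and $\mathbf t^{CAV}=(t^{CAV}_1,\dots,t^{CAV}_R)$ the corresponding positive route travel times; let $t_{min}=\min_rt^{CAV}_r$, $t_{max}=\max_rt^{CAV}_r$ and $\overline{t^{CAV}}=\frac1{q^{CAV}}\sum_rq^{CAV}_rt^{CAV}_r$. Let $\gamma^F:I\to(0,\infty)$ be a measurable discount factor profile, and for an offer profile $T^{CAV}$ set $u^{HDV}_i=t_{min}$, $u^{CAV}_i=\gamma^F_iT^{CAV}_i$. (i) If there exists a feasible offer profile $T^{CAV}$ subject to $(\mathbf q^{CAV},\mathbf t^{CAV})$ with $u^{CAV}_i\le u^{HDV}_i$ for every $i$, then $\overline{t^{CAV}}\le t_{min}\,\mathbb E(1/\gamma^F)$. (ii) If $R=2$ and $t_{min}/t_{max}\le\gamma^F_i\le1$ for every $i$, then $\overline{t^{CAV}}\le t_{min}\,\mathbb E(1/\gamma^F)$ is also sufficient for the existence of such a feasible offer profile.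
   Context: Drivers form a measure space $(I,di)$ with total mass $|I|=q^{CAV}$ (interval with Lebesgue measure, or $\{1,\dots,q^{CAV}\}$ with counting measure). $\mathbb E(1/\gamma^F)=\frac1{|I|}\int_I\frac1{\gamma^F_i}\,di$. An offer profile subject to $(\mathbf q^{CAV},\mathbf t^{CAV})$ is a measurable $T^{CAV}:I\to[t_{min},t_{max}]$ with $\frac1{|I|}\int_IT^{CAV}_i\,di=\overline{t^{CAV}}$. An assignment plan inducing it is a measurable $\mu:I\times\{1,\dots,R\}\to[0,1]$ with $\int_I\mu(i,r)\,di=q^{CAV}_r$ for every $r$, $\sum_r\mu(i,r)=1$ and $\sum_rt^{CAV}_r\mu(i,r)=T^{CAV}_i$ for a.e. $i$; the profile is feasible if some assignment plan induces it. *)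

From HB Require Import structures.
From mathcomp Require Import all_boot all_order all_algebra.
From mathcomp Require Import all_classical all_reals all_analysis.
Set Implicit Arguments. Unset Strict Implicit. Unset Printing Implicit Defensive.
Import Order.TTheory GRing.Theory Num.Theory.
Local Open Scope classical_set_scope.
Local Open Scope ring_scope.

Section Defs.
Context (K : realType) (d : measure_display) (I : measurableType d)
  (mu : {measure set I -> \bar K}) (R : nat).

Definition qtot (q : 'I_R -> K) : K := \sum_(r < R) q r.

(* t_min = min_r t_r and t_max = max_r t_r (meaningful for R >= 1; the seed
   element is t of the first route, so it does not affect the value). *)
Definition tmin (t : 'I_R -> K) : K :=
  \big[Num.min/head 0 [seq t r | r <- enum 'I_R]]_(r < R) t r.
Definition tmax (t : 'I_R -> K) : K :=
  \big[Num.max/head 0 [seq t r | r <- enum 'I_R]]_(r < R) t r.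

Definition tbar (q t : 'I_R -> K) : K := (qtot q)^-1 * \sum_(r < R) q r * t r.

Definition Einv (gam : I -> K) : \bar K :=
  (((fine (mu setT))^-1)%:E * \int[mu]_(x in setT) ((gam x)^-1)%:E)%E.

Definition offer_profile (q t : 'I_R -> K) (T : I -> K) : Prop :=
  [/\ measurable_fun setT T,
      (forall i, tmin t <= T i <= tmax t) &
      (((fine (mu setT))^-1)%:E * \int[mu]_(x in setT) (T x)%:E)%E = (tbar q t)%:E].

Definition assignment_plan (q t : 'I_R -> K) (T : I -> K) (m : I -> 'I_R -> K)
  : Prop :=
  [/\ (forall r, measurable_fun setT (fun i => m i r)),
      (forall i r, 0 <= m i r <= 1),
      (forall r, (\int[mu]_(x in setT) (m x r)%:E)%E = (q r)%:E),
      {ae mu, forall i, \sum_(r < R) m i r = 1} &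
      {ae mu, forall i, \sum_(r < R) t r * m i r = T i}].

Definition feasible_offer (q t : 'I_R -> K) (T : I -> K) : Prop :=
  offer_profile q t T /\ exists m, assignment_plan q t T m.

End Defs.

From HB Require Import structures.
From mathcomp Require Import all_boot all_order all_algebra.
From mathcomp Require Import all_classical all_reals all_analysis.
From mathcomp Require Import measurable_realfun.
From mathcomp Require Import ring lra.
Import Order.TTheory GRing.Theory Num.Theory.
Local Open Scope classical_set_scope.
Local Open Scope ring_scope.

(* (i) A profile with gamma_i T_i <= t_min lies below t_min / gamma pointwise;
   averaging over the drivers gives tbar <= t_min E(1/gamma).
   (ii) Under t_min/t_max <= gamma <= 1 the profile U_i = t_min / gamma_i takes
   values in [t_min, t_max] and has average t_min E(1/gamma) >= tbar, while the
   constant profile t_min has average t_min <= tbar.  A suitable convex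
   combination of the two has average exactly tbar, stays in [t_min, t_max] and
   still satisfies gamma_i T_i <= gamma_i U_i = t_min.  With two routes every
   offer profile is feasible: send driver i to each route with the barycentric
   coordinate of T_i with respect to (t_1, t_2), or in the proportions q_r / q
   when t_1 = t_2. *)

Section RealFacts.
Context {K : realType}.

Lemma line_path_onto_itvcc {a b c : K} : a <= b <= c ->
  exists2 l, 0 <= l <= 1 & line_path a c l = b.
Proof.
case/andP=> ab bc; have [ac|] := ltP a c.
  have : [set` `[a, c]] b by rewrite /= in_itv /= ab bc.
  rewrite -(range_line_path true false ac) => -[l l01 <-].
  by exists l; rewrite /= in_itv /= in l01.
move=> ca; have -> : b = a by apply/le_anti; rewrite ab (le_trans bc).
by exists 0; rewrite ?lexx ?ler01 ?line_path0.
Qed.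

Lemma factor_itv01 (a b x : K) : Num.min a b <= x <= Num.max a b ->
  0 <= factor a b x <= 1.
Proof.
have le_factor01 (u v : K) : u <= x <= v -> 0 <= factor u v x <= 1.
  case/andP=> ux xv; have [uv|] := eqVneq u v.
    by rewrite uv factor_flat lexx ler01.
  move=> uv; have le_uv := le_trans ux xv.
  by rewrite -(factorl u v) -(factorr uv) !leW_factor.
have [_|ba] := leP a b; first exact: le_factor01.
move=> /le_factor01/andP[f0 f1].
by rewrite -onem_factor ?lt_eqF // /unstable.onem subr_ge0 f1 gerBl.
Qed.

End RealFacts.

Section Routes.
Context {K : realType} {R : nat} {q : 'I_R -> K} (t : 'I_R -> K).

Lemma tmin_le r : tmin t <= t r.
Proof. exact: bigmin_le. Qed.

Lemma le_tmax r : t r <= tmax t.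
Proof. exact: le_bigmax. Qed.

Lemma tmin_gt0 : (0 < R)%N -> (forall r, 0 < t r) -> 0 < tmin t.
Proof.
move=> R_gt0 t_gt0; apply/bigmin_gtP; split=> [|r _]; last exact: t_gt0.
case: (enum 'I_R) (mem_enum 'I_R (Ordinal R_gt0)) => [|r s _] /=.
  by rewrite in_nil inE.
exact: t_gt0.
Qed.

Lemma routes_gt0 : 0 < qtot q -> (0 < R)%N.
Proof. by case: R q => // q'; rewrite /qtot big_ord0 ltxx. Qed.

Lemma le_qtot r : (forall r, 0 <= q r) -> q r <= qtot q.
Proof.
by move=> q_ge0; rewrite /qtot (bigD1 r) //= lerDl sumr_ge0.
Qed.

Hypotheses (q_ge0 : forall r, 0 <= q r) (qtot_gt0 : 0 < qtot q).

Lemma tbar_itv : tmin t <= tbar q t <= tmax t.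
Proof.
rewrite /tbar mulrC ler_pdivlMr // ler_pdivrMr // /qtot !mulr_sumr.
by apply/andP; split; apply: ler_sum => r _;
  have := tmin_le r; have := le_tmax r; have := q_ge0 r; nra.
Qed.

End Routes.

Section TwoRoutes.
Context {K : realType}.

Lemma ord2P (r : 'I_2) : r = ord0 \/ r = ord_max.
Proof. by case: r => -[|[|//]] r2; [left|right]; apply: val_inj. Qed.

Lemma big_ord2 (F : 'I_2 -> K) : \sum_(r < 2) F r = F ord0 + F ord_max.
Proof.
by rewrite !big_ord_recl big_ord0 addr0; congr (_ + F _); apply: val_inj.
Qed.

Lemma tmin2 (t : 'I_2 -> K) : tmin t = Num.min (t ord0) (t ord_max).
Proof.
rewrite /tmin enum_ordSl /= !big_ord_recl big_ord0.
have -> : lift ord0 ord0 = ord_max :> 'I_2 by apply: val_inj.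
by rewrite [Num.min (t ord_max) _]minC min_minxK.
Qed.

Lemma tmax2 (t : 'I_2 -> K) : tmax t = Num.max (t ord0) (t ord_max).
Proof.
rewrite /tmax enum_ordSl /= !big_ord_recl big_ord0.
have -> : lift ord0 ord0 = ord_max :> 'I_2 by apply: val_inj.
by rewrite [Num.max (t ord_max) _]maxC max_maxxK.
Qed.

End TwoRoutes.

Section Integrals.
Context {K : realType} {d : measure_display} {I : measurableType d}
  {mu : {measure set I -> \bar K}}.

Lemma measurable_funV_ge0 {f : I -> K} : measurable_fun setT f ->
  (forall x, 0 <= f x) -> measurable_fun setT (fun x => (f x)^-1).
Proof.
move=> mf f_ge0; rewrite (_ : (fun x => _) = fun x => f x `^ (-1)).
  exact: measurableT_comp (measurable_powR _) mf.
by apply/funext => x; rewrite powR_inv1.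
Qed.

Lemma ge0_le_integral_inv (f g : I -> K) (c : K) : 0 <= c ->
  measurable_fun setT f -> measurable_fun setT g ->
  (forall x, 0 <= f x) -> (forall x, 0 < g x) -> (forall x, g x * f x <= c) ->
  (\int[mu]_(x in setT) (f x)%:E <= c%:E * \int[mu]_(x in setT) ((g x)^-1)%:E)%E.
Proof.
move=> c_ge0 mf mg f_ge0 g_gt0 gf_le.
have mgV : measurable_fun setT (fun x => (g x)^-1).
  by apply: measurable_funV_ge0 => // x; exact: ltW.
rewrite -ge0_integralZl_EFin //; last first.
- exact/measurable_EFinP.
- by move=> x _; rewrite lee_fin invr_ge0 ltW.
apply: ge0_le_integral => //.
- by move=> x _; rewrite lee_fin.
- exact/measurable_EFinP.
- by apply: measurable_funeM; exact/measurable_EFinP.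
- move=> x _; rewrite -EFinM lee_fin -(ler_pM2l (g_gt0 x)).
  by rewrite mulrCA divff ?gt_eqF ?mulr1.
Qed.

Lemma integral_EFin_Rintegral {f : I -> K} : mu.-integrable setT (EFin \o f) ->
  (\int[mu]_(x in setT) (f x)%:E)%E = (\int[mu]_x f x)%:E.
Proof. by move=> f_int; rewrite fineK //; exact: integrable_fin_num. Qed.

Hypothesis mu_fin : (mu setT < +oo)%E.

Lemma bounded_integrable {f : I -> K} {a b : K} : measurable_fun setT f ->
  (forall x, a <= f x <= b) -> mu.-integrable setT (EFin \o f).
Proof.
move=> mf f_itv; apply: measurable_bounded_integrable => //.
exists (`|a| + `|b|); split; first exact: num_real.
move=> M M_gt x _ /=; apply: ltW; apply: le_lt_trans M_gt.
have /andP[af fb] := f_itv x.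
have := ler_norm a; have := ler_norm (- a).
have := ler_norm b; have := ler_norm (- b).
by rewrite !normrN ler_norml => *; apply/andP; split; lra.
Qed.

Lemma Rintegral_affine (f : I -> K) (a b : K) :
  mu.-integrable setT (EFin \o f) ->
  \int[mu]_x (a + b * f x) = a * fine (mu setT) + b * \int[mu]_x f x.
Proof.
move=> f_int; have a_int : mu.-integrable setT (EFin \o fun=> a).
  by apply: (@bounded_integrable _ a a) => [|x]; rewrite ?lexx.
have bf_int : mu.-integrable setT (EFin \o fun x => b * f x).
  by apply: eq_integrable (integrableZl _ b f_int) => // x _; rewrite /= EFinM.
by rewrite RintegralD // RintegralZl // Rintegral_cst.
Qed.

Lemma Rintegral_line_path (f : I -> K) (a l : K) :
  mu.-integrable setT (EFin \o f) ->
  \int[mu]_x line_path a (f x) l =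
  line_path (a * fine (mu setT)) (\int[mu]_x f x) l.
Proof. by move=> f_int; rewrite Rintegral_affine // /line_path mulrA. Qed.

Lemma Rintegral_factor (f : I -> K) (a b : K) :
  mu.-integrable setT (EFin \o f) ->
  \int[mu]_x factor a b (f x) = (\int[mu]_x f x - a * fine (mu setT)) / (b - a).
Proof.
move=> f_int.
under eq_Rintegral do rewrite /factor mulrBl addrC -mulNr [f _ / _]mulrC.
by rewrite Rintegral_affine //; ring.
Qed.

End Integrals.

Section Offers.
Context {K : realType} {d : measure_display} {I : measurableType d}
  {mu : {measure set I -> \bar K}} {R : nat} {q t : 'I_R -> K}.
Hypotheses (q_ge0 : forall r, 0 <= q r) (qtot_gt0 : 0 < qtot q)
  (mu_qtot : mu setT = (qtot q)%:E).

Let mu_fin : (mu setT < +oo)%E. Proof. by rewrite mu_qtot ltry. Qed.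
Let fine_mu : fine (mu setT) = qtot q. Proof. by rewrite mu_qtot. Qed.

Lemma offer_profileE (T : I -> K) : offer_profile mu q t T <->
  [/\ measurable_fun setT T, (forall i, tmin t <= T i <= tmax t) &
      \int[mu]_x T x = \sum_(r < R) q r * t r].
Proof.
split=> -[mT T_itv T_avg]; split=> //; move: T_avg;
  rewrite (integral_EFin_Rintegral (bounded_integrable mu_fin mT T_itv));
  rewrite fine_mu -EFinM /tbar.
- move=> T_avg; apply: (mulfI (x := (qtot q)^-1)); last exact: EFin_inj T_avg.
  by rewrite invr_eq0 gt_eqF.
- by move->.
Qed.

Lemma proportional_assignment_plan (T : I -> K) : (forall i, T i = tbar q t) ->
  assignment_plan mu q t T (fun _ r => q r / qtot q).
Proof.
move=> T_tbar; split.
- by move=> r; exact: measurable_cst.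
- move=> _ r; rewrite ler_pdivrMr // mul1r le_qtot // andbT.
  exact: divr_ge0 (q_ge0 r) (ltW qtot_gt0).
- by move=> r; rewrite integral_cst // mu_qtot -EFinM divfK ?gt_eqF.
- by apply: aeW => _; rewrite -mulr_suml divff ?gt_eqF.
- apply: aeW => i; rewrite T_tbar /tbar mulrC mulr_suml.
  by apply: eq_bigr => r _; rewrite mulrCA mulrA.
Qed.

Lemma exists_offer_profile (gam : I -> K) :
  (forall r, 0 < t r) -> measurable_fun setT gam ->
  (forall i, tmin t / tmax t <= gam i <= 1) ->
  ((tbar q t)%:E <= (tmin t)%:E * Einv mu gam)%E ->
  exists T, offer_profile mu q t T /\ forall i, gam i * T i <= tmin t.
Proof.
move=> t_gt0 mgam gam_itv tbar_le.
have R_gt0 := routes_gt0 qtot_gt0.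
have tm_gt0 : 0 < tmin t := tmin_gt0 t R_gt0 t_gt0.
have tM_gt0 : 0 < tmax t.
  exact: lt_le_trans tm_gt0 (le_trans (tmin_le t (Ordinal R_gt0)) (le_tmax t _)).
have gam_gt0 i : 0 < gam i.
  by case/andP: (gam_itv i) => + _; apply: lt_le_trans; rewrite divr_gt0.
pose U i := tmin t / gam i.
have mgamV := measurable_funV_ge0 mgam (fun i => ltW (gam_gt0 i)).
have mU : measurable_fun setT U := measurable_funM (measurable_cst _) mgamV.
have U_itv i : tmin t <= U i <= tmax t.
  case/andP: (gam_itv i) => lo hi; rewrite ler_pdivrMr // in lo.
  by rewrite ler_pdivlMr // ler_pdivrMr // ger_pMr // hi mulrC lo.
have U_int := bounded_integrable mu_fin mU U_itv.
have total_ge : tmin t * qtot q <= \sum_(r < R) q r * t r.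
  have /andP[tm_tbar _] : tmin t <= tbar q t <= tmax t.
    exact: tbar_itv.
  by rewrite -ler_pdivlMr // mulrC.
have total_le : \sum_(r < R) q r * t r <= \int[mu]_x U x.
  move: tbar_le; rewrite /Einv muleCA -ge0_integralZl_EFin //; first last.
  - exact: ltW.
  - exact/measurable_EFinP.
  - by move=> i _; rewrite lee_fin invr_ge0 ltW.
  under eq_integral do rewrite -EFinM.
  rewrite (integral_EFin_Rintegral U_int) fine_mu -EFinM lee_fin /tbar.
  by rewrite ler_pM2l ?invr_gt0.
have [l l01 lE] := line_path_onto_itvcc (introT andP (conj total_ge total_le)).
pose T i := line_path (tmin t) (U i) l.
have T_itv i : tmin t <= T i <= U i.
  have /andP[tmin_U _] := U_itv i.
  by have := @mem_line_path_itvcc _ _ _ tmin_U l; rewrite /= !in_itv /=; apply.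
exists T; split.
- apply/offer_profileE; split.
  + by apply: measurable_funD; apply: measurable_funM.
  + move=> i; have /andP[-> TU] := T_itv i.
    by have /andP[_ /(le_trans TU)] := U_itv i.
  + by rewrite Rintegral_line_path // fine_mu lE.
- move=> i; have /andP[_ TU] := T_itv i.
  apply: le_trans (ler_wpM2l (ltW (gam_gt0 i)) TU) _.
  by rewrite mulrCA divff ?gt_eqF ?mulr1.
Qed.

End Offers.

Section TwoRouteOffers.
Context {K : realType} {d : measure_display} {I : measurableType d}
  {mu : {measure set I -> \bar K}} {q t : 'I_2 -> K}.
Hypotheses (q_ge0 : forall r, 0 <= q r) (qtot_gt0 : 0 < qtot q)
  (mu_qtot : mu setT = (qtot q)%:E).

Let mu_fin : (mu setT < +oo)%E. Proof. by rewrite mu_qtot ltry. Qed.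

Lemma barycentric_assignment_plan (T : I -> K) :
  t ord0 != t ord_max -> offer_profile mu q t T ->
  assignment_plan mu q t T (fun x r => factor (t (rev_ord r)) (t r) (T x)).
Proof.
move=> t01 /(offer_profileE qtot_gt0 mu_qtot)[mT T_itv T_total].
have rev0 : rev_ord ord0 = ord_max :> 'I_2 by apply: val_inj.
have rev1 : rev_ord ord_max = ord0 :> 'I_2 by apply: val_inj.
have onem_factor01 x :
    factor (t ord_max) (t ord0) x = 1 - factor (t ord0) (t ord_max) x.
  by rewrite -onem_factor.
have plan_itv x r : 0 <= factor (t (rev_ord r)) (t r) (T x) <= 1.
  apply: factor_itv01; have := T_itv x; rewrite tmin2 tmax2.
  by case: (ord2P r) => ->; rewrite ?rev0 ?rev1 // minC maxC.
have mplan r : measurable_fun setT (fun x => factor (t (rev_ord r)) (t r) (T x)).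
  by apply: measurable_funM => //; apply: measurable_funB.
split=> // [r||].
- have T_int := bounded_integrable mu_fin mT T_itv.
  have plan_int := bounded_integrable mu_fin (mplan r) (plan_itv^~ r).
  rewrite (integral_EFin_Rintegral plan_int).
  rewrite Rintegral_factor // T_total mu_qtot /= /qtot !big_ord2.
  case: (ord2P r) => ->; rewrite ?rev0 ?rev1; congr EFin; field.
    by rewrite subr_eq0.
  by rewrite subr_eq0 eq_sym.
- by apply: aeW => x; rewrite big_ord2 rev0 rev1 onem_factor01 subrK.
- apply: aeW => x; rewrite big_ord2 rev0 rev1 onem_factor01.
  by rewrite -[RHS](factorK t01) /line_path; ring.
Qed.

Lemma offer_profile2_feasible (T : I -> K) :
  offer_profile mu q t T -> feasible_offer mu q t T.
Proof.
move=> T_offer; split=> //.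
have [t_eq|t01] := eqVneq (t ord0) (t ord_max); last first.
  by eexists; exact: barycentric_assignment_plan.
eexists; apply: proportional_assignment_plan => // i.
have /andP[tbar_lo tbar_hi] := tbar_itv t q_ge0 qtot_gt0.
case/(offer_profileE qtot_gt0 mu_qtot): T_offer => _ T_itv _.
have /andP[T_lo T_hi] := T_itv i.
move: tbar_lo tbar_hi T_lo T_hi; rewrite tmin2 tmax2 t_eq minxx maxxx; lra.
Qed.

End TwoRouteOffers.

Theorem proposition4 (K : realType) (d : measure_display) (I : measurableType d)
  (mu : {measure set I -> \bar K}) (R : nat) (q t : 'I_R -> K) (gam : I -> K) :
  (forall r, 0 <= q r) ->
  (forall r, 0 < t r) ->
  0 < qtot q ->
  mu setT = (qtot q)%:E ->
  measurable_fun setT gam ->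
  (forall i, 0 < gam i) ->
  ((exists T : I -> K, feasible_offer mu q t T /\
      (forall i, gam i * T i <= tmin t)) ->
     ((tbar q t)%:E <= (tmin t)%:E * Einv mu gam)%E)
  /\
  (R = 2%N ->
   (forall i, tmin t / tmax t <= gam i <= 1) ->
   ((tbar q t)%:E <= (tmin t)%:E * Einv mu gam)%E ->
   exists T : I -> K, feasible_offer mu q t T /\
      (forall i, gam i * T i <= tmin t)).
Proof.
move=> q_ge0 t_gt0 qtot_gt0 mu_qtot mgam gam_gt0; split.
  case=> T [[[mT T_itv T_avg] _] gamT_le].
  have tm_gt0 := tmin_gt0 t (routes_gt0 qtot_gt0) t_gt0.
  rewrite /Einv -T_avg muleCA lee_wpmul2l ?lee_fin ?invr_ge0 ?fine_ge0 //.
  apply: ge0_le_integral_inv => // [|i]; first exact: ltW.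
  by have /andP[/(le_trans (ltW tm_gt0))] := T_itv i.
move=> R2; subst R => gam_itv tbar_le.
have [T [T_offer gamT_le]] :=
  exists_offer_profile q_ge0 qtot_gt0 mu_qtot _ t_gt0 mgam gam_itv tbar_le.
by exists T; split=> //; exact: offer_profile2_feasible.
Qed.
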